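(* Let $n\ge 2$ be an integer and let $p$ be a real polynomial of degree at most $n-2$ that is non-negative on $[-1,1]$ and satisfies $p(1)=1$. Then $$\max_{x\in[-1,1]}|(1-x)^2p(x)|\ \ge\ \frac{16}{n^2}\tan^2\!\left(\frac{\pi}{2n}\right).$$ Moreover, equality holds if and only if $$p(x)=S_{n-2}(x):=\frac{8}{n^2}\tan^2\!\left(\frac{\pi}{2n}\right)\frac{1}{(1-x)^2}\left(1+T_n\!\left(\frac{1+\cos(\pi/n)}{2}(x+1)-1\right)\right).$$
   Context: $T_n$ denotes the Chebyshev polynomial of the first kind of degree $n$, $T_n(\cos\theta)=\cos(n\theta)$. The expression defining $S_{n-2}$ is a polynomial (the singularity at $x=1$ is removable). *)

From HB Require Import structures.
From mathcomp Require Import all_boot all_order all_algebra.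
From mathcomp Require Import all_classical all_reals all_analysis.
Set Implicit Arguments. Unset Strict Implicit. Unset Printing Implicit Defensive.
Import Order.TTheory GRing.Theory Num.Theory.
Local Open Scope ring_scope.

(* Chebyshev polynomials of the first kind, via the standard recurrence
   T_0 = 1, T_1 = X, T_{n+2} = 2 X T_{n+1} - T_n  (so that T_n(cos t) = cos(n t)). *)
Fixpoint chebT_pair (R : nzRingType) (n : nat) : {poly R} * {poly R} :=
  match n with
  | 0%N => (1, 'X)
  | m.+1 => let: (a, b) := chebT_pair R m in (b, 2%:R *: 'X * b - a)
  end.

Definition chebT (R : nzRingType) (n : nat) : {poly R} := (chebT_pair R n).1.

(* S_{n-2}(x) = (8/n^2) tan^2(pi/(2n)) (1-x)^{-2} (1 + T_n(((1+cos(pi/n))/2)(x+1) - 1)),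
   realised as the exact polynomial quotient by (1-x)^2 = (X-1)^2. *)
Definition S_poly (R : realType) (n : nat) : {poly R} :=
  let c := 8 / (n%:R ^+ 2) * (tan (pi / (2 * n%:R))) ^+ 2 in
  let a := (1 + cos (pi / n%:R)) / 2 in
  (c *: (1 + (chebT R n \Po (a *: ('X + 1) - 1)))) %/ (('X - 1) ^+ 2).

From HB Require Import structures.
From mathcomp Require Import all_boot all_order all_algebra.
From mathcomp Require Import all_classical all_reals all_analysis.
From mathcomp Require Import ring lra zify.
Import Order.TTheory GRing.Theory Num.Theory.
Local Open Scope classical_set_scope.
Local Open Scope ring_scope.

(* With a = (1 + cos(pi/n))/2, c = (8/n^2) tan^2(pi/(2n)) and L(x) = a(x+1) - 1,
   the polynomial F = c (1 + T_n o L) vanishes to second order at 1, because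
   L(1) = cos(pi/n) is an extremum of T_n; so F = (X-1)^2 S_{n-2}, S_{n-2}(1) = 1,
   and 0 <= F <= 2c on [-1,1], F taking the values 0 and 2c alternately at the
   n-1 points x_k = L^-1(cos(k pi/n)), 2 <= k <= n, of [-1,1).  In particular
   S_{n-2} attains the bound 2c.
   If p is admissible and (1-x)^2 p <= 2c on [-1,1], write S_{n-2} - p = (X-1) v;
   then F - (1-x)^2 p = (x-1)^3 v, so v has weakly alternating signs at the n-1
   nodes while deg v <= n-3.  By Lagrange interpolation the (zero) coefficient
   of degree n-2 of v is sum_k v(x_k) / prod_(j <> k) (x_k - x_j), a sum of terms
   of one sign; so v vanishes at all n-1 nodes, hence v = 0 and p = S_{n-2}. *)

Section ChebyshevAlgebra.
Variable R : comNzRingType.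

(* The pair (T_m, U_(m-1)): the second-kind polynomial is shifted by one, so
   that [chebU 0 = 0] and [(chebT m)^`() = m U_(m-1)]. *)
Fixpoint chebTU (m : nat) : {poly R} * {poly R} :=
  if m is m'.+1 then
    let: (t, u) := chebTU m' in ('X * t - (1 - 'X ^+ 2) * u, 'X * u + t)
  else (1, 0).

Definition chebU (m : nat) : {poly R} := (chebTU m).2.

Lemma chebT_pairE m : chebT_pair R m = ((chebTU m).1, (chebTU m.+1).1).
Proof.
elim: m => [|m /= ->]; first by rewrite /= !(mulr0, mulr1, subr0).
by congr pair; case: (chebTU m) => t u /=; rewrite scaler_nat; ring.
Qed.

Lemma chebT0 : chebT R 0 = 1. Proof. by []. Qed.
Lemma chebU0 : chebU 0 = 0. Proof. by []. Qed.

Lemma chebTS m : chebT R m.+1 = 'X * chebT R m - (1 - 'X ^+ 2) * chebU m.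
Proof. by rewrite /chebT /chebU !chebT_pairE /=; case: (chebTU m). Qed.

Lemma chebUS m : chebU m.+1 = 'X * chebU m + chebT R m.
Proof. by rewrite /chebT /chebU chebT_pairE /=; case: (chebTU m). Qed.

Lemma size_chebT_chebU m :
  (size (chebT R m) <= m.+1)%N /\ (size (chebU m) <= m)%N.
Proof.
elim: m => [|m [szT szU]]; first by rewrite chebT0 chebU0 size_poly1 size_poly0.
have szXp (q : {poly R}) k : (size q <= k -> size ('X * q)%R <= k.+1)%N.
  by move=> sq; rewrite (leq_trans (size_polyMleq _ _)) // size_polyX.
rewrite chebTS chebUS; split; rewrite (leq_trans (size_polyD _ _)) // geq_max.
  rewrite szXp // size_polyN (leq_trans (size_polyMleq _ _)) //.
  by rewrite -opprB size_polyN -polyC1 size_XnsubC //=; lia.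
by rewrite szXp // (leq_trans szT).
Qed.

Lemma deriv_chebT_chebU m :
  (chebT R m)^`() = chebU m *+ m /\
  (1 - 'X ^+ 2) * (chebU m)^`() = 'X * chebU m - chebT R m *+ m.
Proof.
elim: m => [|m [dT dU]]; first by rewrite chebT0 chebU0 -polyC1 derivC deriv0; split; ring.
rewrite chebTS chebUS !(derivB, derivD, derivM, derivX, derivXn) -polyC1 derivC polyC1 dT.
split; first by rewrite dU; ring.
have -> : (1 - 'X ^+ 2) * (1 * chebU m + 'X * (chebU m)^`() + chebU m *+ m) =
  (1 - 'X ^+ 2) * (chebU m *+ m.+1) + 'X * ((1 - 'X ^+ 2) * (chebU m)^`()) by ring.
rewrite dU; ring.
Qed.

End ChebyshevAlgebra.

Lemma coef_lead_lagrange (K : fieldType) (n : nat) (x : nat -> K) (p : {poly K}) :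
  (0 < n)%N -> injective x -> (size p <= n)%N ->
  p`_n.-1 = \sum_(i < n) p.[x i] / \prod_(j < n | j != i) (x i - x j).
Proof.
move=> n_gt0 x_inj sp; rewrite {1}(lagrange_gen n_gt0 x_inj sp) coef_sum.
apply: eq_bigr => i _; rewrite coefCM; congr (_ * _).
have := size_lagrange_ n_gt0 x_inj i; rewrite (lagrangeE n_gt0 x_inj) /=.
set P := \prod_(_ < _ | _) _ => szP.
have PxiE : P.[x i] = \prod_(j < n | j != i) (x i - x j).
  by rewrite horner_prod; apply: eq_bigr => j _; rewrite hornerXsubC.
have Pxi_neq0 : P.[x i] != 0.
  by rewrite PxiE; apply/prodf_neq0 => j ji; rewrite subr_eq0 (inj_eq x_inj) eq_sym.
rewrite coefCM PxiE -[RHS]mulr1; congr (_ * _).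
move: szP; rewrite size_Cmul ?invr_eq0 // => <-.
by rewrite -lead_coefE; apply/monicP/monic_prod_XsubC.
Qed.

Lemma prod_sub_decreasing_sign {R : realFieldType} {m : nat} {t : nat -> R} :
  (forall i j, (i < j <= m)%N -> t j < t i) -> forall i, (i <= m)%N ->
  0 < (-1) ^+ i * \prod_(j < m.+1 | j != i :> nat) (t i - t j).
Proof.
move=> t_decr i im; rewrite (bigID (fun j : 'I_m.+1 => (j < i)%N)) /= mulrA.
have -> : \prod_(j < m.+1 | (j != i :> nat) && (j < i)%N) (t i - t j) =
          \prod_(j < i) (t i - t j).
  rewrite (big_ord_widen _ (fun j => t i - t j) (leqW im)).
  by apply: eq_bigl => j; rewrite andb_idl // => ji; rewrite neq_ltn ji.
apply: mulr_gt0.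
  rewrite -[X in (-1) ^+ X]card_ord -prodr_const -big_split /=.
  by apply: prodr_gt0 => j _; rewrite mulN1r oppr_gt0 subr_lt0 t_decr // ltn_ord.
apply: prodr_gt0 => j /andP[ji /negbTE jNi]; rewrite subr_gt0 t_decr //.
by rewrite -[(j <= m)%N]ltnS ltn_ord andbT ltn_neqAle eq_sym ji leqNgt jNi.
Qed.

Lemma sign_alternating_poly_eq0 (R : realFieldType) (m : nat) (t : nat -> R)
    (u : {poly R}) :
  (forall i j, (i < j <= m)%N -> t j < t i) -> (size u <= m)%N ->
  (forall i, (i <= m)%N -> 0 <= (-1) ^+ i * u.[t i]) -> u = 0.
Proof.
move=> t_decr su u_alt.
(* [lagrange_gen] needs nodes that are injective on all of [nat]. *)
pose s k := if (k <= m)%N then t k else t m - (k - m)%:R.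
have s_decr i j : (i < j)%N -> s j < s i.
  rewrite /s; case: (leqP j m) => jm; case: (leqP i m) => im ij.
  - by rewrite t_decr // ij.
  - by have := leq_trans (ltnW ij) jm; rewrite leqNgt im.
  - apply: (@lt_le_trans _ _ (t m)); first by rewrite ltrBlDr ltrDl ltr0n subn_gt0.
    by case: (ltngtP i m) => [ilm||->] //; [apply/ltW/t_decr; rewrite ilm /= | lia].
  - by rewrite ltrD2l ltrN2 ltr_nat; lia.
have s_inj : injective s.
  by move=> i j e; case: (ltngtP i j) => // /s_decr; rewrite e ltxx.
have sE i : (i <= m)%N -> s i = t i by rewrite /s => ->.
have s_decr_le i j : (i < j <= m)%N -> s j < s i by move=> /andP[/s_decr].
pose w i := \prod_(j < m.+1 | j != i :> nat) (s i - s j).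
have w_sign : forall i, (i <= m)%N -> 0 < (-1) ^+ i * w i.
  exact: prod_sub_decreasing_sign.
have w_neq0 i : (i <= m)%N -> w i != 0.
  by move/w_sign; apply: contraTneq => ->; rewrite mulr0 ltxx.
have term_ge0 (i : 'I_m.+1) : 0 <= u.[s i] / w i.
  have im : (i <= m)%N by rewrite -ltnS.
  have -> : u.[s i] / w i = ((-1) ^+ i * u.[t i]) / ((-1) ^+ i * w i).
    by rewrite sE // invfM mulrACA divff ?mul1r // signr_eq0.
  by rewrite divr_ge0 ?(ltW (w_sign i im)) ?u_alt.
have sum0 : \sum_(i < m.+1) u.[s i] / w i = 0.
  by rewrite -coef_lead_lagrange ?(leqW su) // nth_default.
have root_s (i : 'I_m.+1) : root u (s i).
  have /eqP := psumr_eq0P (fun j _ => term_ge0 j) sum0 (i := i) isT.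
  by rewrite mulf_eq0 invr_eq0 (negbTE (w_neq0 i _)) ?orbF // -ltnS.
apply: (@roots_geq_poly_eq0 _ _ (mkseq s m.+1)); rewrite ?size_mkseq ?mkseq_uniq //; last exact: leqW.
by apply/allP => y /mapP[i]; rewrite mem_iota add0n => im ->; apply: (root_s (Ordinal im)).
Qed.

Section ChebyshevTrig.
Variable R : realType.

Lemma chebT_chebU_cos m (t : R) :
  (chebT R m).[cos t] = cos (m%:R * t) /\
  (chebU R m).[cos t] * sin t = sin (m%:R * t).
Proof.
elim: m => [|m [IHT IHU]].
  by rewrite chebT0 chebU0 !mul0r hornerC cos0 horner0 mul0r sin0.
rewrite mulrSr mulrDl mul1r chebTS chebUS cosD sinD -IHT -IHU !hornerE.
by rewrite -sin2cos2; split; ring.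
Qed.

Lemma chebT_bounded m (y : R) : -1 <= y <= 1 -> -1 <= (chebT R m).[y] <= 1.
Proof.
move=> y_itv; have y_in : y \in `[-1, 1] by rewrite in_itv.
by rewrite -(acosK y_in) (chebT_chebU_cos _ _).1 cos_geN1 cos_le1.
Qed.

Lemma cos_mulr_pi k : cos (k%:R * pi) = (-1) ^+ k :> R.
Proof.
elim: k => [|k IHk]; first by rewrite mul0r cos0.
by rewrite mulrSr mulrDl mul1r cosDpi IHk exprSr mulrN1.
Qed.

Lemma chebT_cos_mulr_pi n k : (0 < n)%N ->
  (chebT R n).[cos (k%:R * (pi / n%:R))] = (-1) ^+ k.
Proof.
move=> n_gt0; rewrite (chebT_chebU_cos _ _).1 -cos_mulr_pi; congr cos.
by field; rewrite pnatr_eq0 -lt0n.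
Qed.

Lemma chebU_cos_eq0 m (t : R) :
  sin t != 0 -> sin (m%:R * t) = 0 -> (chebU R m).[cos t] = 0.
Proof.
move=> st_neq0 smt0; have := (chebT_chebU_cos m t).2.
by rewrite smt0 => /eqP; rewrite mulf_eq0 (negbTE st_neq0) orbF => /eqP.
Qed.

End ChebyshevTrig.

Lemma sqr_XsubC_factor (R : comNzRingType) (G : {poly R}) (z : R) :
  G.[z] = 0 -> G^`().[z] = 0 -> exists g, G = g * ('X - z%:P) ^+ 2.
Proof.
move=> Gz0 dGz0; have /factor_theorem [q Gq] : root G z by apply/eqP.
have /factor_theorem [g qg] : root q z.
  by apply/eqP; move: dGz0; rewrite Gq derivM derivXsubC !hornerE subrr mulr0 add0r.
by exists g; rewrite Gq qg -mulrA -expr2.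
Qed.

Lemma deriv2_mul_sqr_XsubC (R : comNzRingType) (g : {poly R}) (z : R) :
  (g * ('X - z%:P) ^+ 2)^`()^`().[z] = g.[z] *+ 2.
Proof.
rewrite expr2 !(derivXsubC, derivD, derivM) -polyC1 !derivC.
by rewrite !(hornerXsubC, hornerD, hornerM, hornerC, horner0) subrr; ring.
Qed.

Lemma normr_horner_le (R : numDomainType) (p : {poly R}) (x : R) :
  `|x| <= 1 -> `|p.[x]| <= \sum_(i < size p) `|p`_i|.
Proof.
move=> x_le1; rewrite horner_coef (le_trans (ler_norm_sum _ _ _)) // ler_sum // => i _.
by rewrite normrM normrX ler_piMr // exprn_ile1.
Qed.

Definition weighted_sup {R : realType} (p : {poly R}) : R :=
  sup [set `|(1 - x) ^+ 2 * p.[x]| | x in `[(-1 : R), 1]].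

Section WeightedSup.
Context {R : realType}.

Lemma weighted_sup_ub (p : {poly R}) x :
  -1 <= x <= 1 -> `|(1 - x) ^+ 2 * p.[x]| <= weighted_sup p.
Proof.
move=> x_itv; apply: sup_upper_bound; last by exists x; rewrite ?in_itv.
split; first by exists `|(1 - x) ^+ 2 * p.[x]|, x; rewrite ?in_itv.
exists (4 * \sum_(i < size p) `|p`_i|) => z [y /=].
rewrite in_itv /= => /andP[y_ge y_le] <-.
rewrite normrM ler_pM //; first by rewrite ger0_norm ?sqr_ge0 //; nra.
by apply: normr_horner_le; rewrite ler_norml y_ge.
Qed.

Lemma weighted_sup_le (p : {poly R}) (b : R) :
  (forall x, -1 <= x <= 1 -> `|(1 - x) ^+ 2 * p.[x]| <= b) -> weighted_sup p <= b.
Proof.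
move=> le_b; apply: ge_sup.
  by exists `|(1 - 0) ^+ 2 * p.[0]|, 0; rewrite //= in_itv /= lerN10 ler01.
by move=> z [x /=]; rewrite in_itv /= => x_itv <-; exact: le_b.
Qed.

End WeightedSup.

Definition extremal_value (R : realType) (n : nat) : R :=
  16 / n%:R ^+ 2 * tan (pi / (2 * n%:R)) ^+ 2.

Section ExtremalPolynomial.
Variables (R : realType) (n : nat).
Hypothesis n_ge2 : (2 <= n)%N.

Let h : R := pi / (2 * n%:R).
Let theta : R := pi / n%:R.
Let a : R := (1 + cos theta) / 2.
Let c : R := 8 / n%:R ^+ 2 * tan h ^+ 2.
Let L : {poly R} := a *: ('X + 1) - 1.
Let F : {poly R} := c *: (1 + (chebT R n \Po L)).

Let n_gt0 : 0 < n%:R :> R. Proof. by rewrite ltr0n; lia. Qed.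
Let n_neq0 : n%:R != 0 :> R. Proof. exact: lt0r_neq0. Qed.

Let theta_h : theta = h *+ 2.
Proof. by rewrite /theta /h; field. Qed.

Let theta_bounds : 0 < theta <= pi / 2.
Proof.
have theta_n : theta * n%:R = pi by rewrite /theta; field.
have pi_pos := pi_gt0 R; have n_ge2R : 2 <= n%:R :> R by rewrite (ler_nat R 2 n).
by apply/andP; split; nra.
Qed.

Let h_bounds : 0 < h < pi / 2.
Proof. by move: theta_bounds; rewrite theta_h mulr2n => /andP[? ?]; apply/andP; split; lra. Qed.

Let cos_h_gt0 : 0 < cos h.
Proof. by apply: cos_gt0_pihalf; move: h_bounds => /andP[? ?]; apply/andP; split; lra. Qed.

Let sin_h_gt0 : 0 < sin h.
Proof. exact: sin_gt0_pihalf. Qed.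

Let sin_theta_gt0 : 0 < sin theta.
Proof. by apply: sin_gt0_pi; move: theta_bounds => /andP[? ?]; apply/andP; split; lra. Qed.

Let a_cos : a = cos h ^+ 2.
Proof. by rewrite /a theta_h cos_mulr2n; field. Qed.

Let a_gt0 : 0 < a.
Proof. by rewrite a_cos exprn_gt0. Qed.

Let a_le1 : a <= 1.
Proof. by rewrite /a; have := cos_le1 theta; lra. Qed.

Let c_ge0 : 0 <= c.
Proof. by rewrite /c mulr_ge0 ?divr_ge0 ?sqr_ge0. Qed.

Lemma extremal_valueE : extremal_value R n = c *+ 2.
Proof. by rewrite /extremal_value /c mulr2n; ring. Qed.

Let horner_F x : F.[x] = c * (1 + (chebT R n).[a * (x + 1) - 1]).
Proof. by rewrite /F /L !hornerE horner_comp !hornerE. Qed.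

Let F_bounds x : -1 <= x <= 1 -> 0 <= F.[x] <= c *+ 2.
Proof.
move=> /andP[x_ge x_le]; rewrite horner_F.
move: a_gt0 a_le1 c_ge0 => a0 a1 c0.
have /(chebT_bounded R n) /andP[] : -1 <= a * (x + 1) - 1 <= 1 by apply/andP; split; nra.
by rewrite mulr2n => *; apply/andP; split; nra.
Qed.

Let chebT_y0 : (chebT R n).[cos theta] = -1.
Proof. by have := chebT_cos_mulr_pi R n 1 (ltnW n_ge2); rewrite mul1r. Qed.

Let chebU_y0 : (chebU R n).[cos theta] = 0.
Proof. by apply: chebU_cos_eq0; rewrite ?gt_eqF // /theta mulrC divfK // sinpi. Qed.

Let deriv2_chebT_y0 : (chebT R n)^`()^`().[cos theta] * sin theta ^+ 2 = n%:R ^+ 2.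
Proof.
have [-> dU] := deriv_chebT_chebU R n.
have := congr1 (horner^~ (cos theta)) dU.
rewrite /= !(hornerM, hornerD, hornerN, hornerC, hornerX, horner_exp, hornerMn).
rewrite chebU_y0 chebT_y0 mulr0 sub0r mulNrn opprK => dU_y0.
by rewrite derivMn hornerMn sin2cos2 mulrnAl mulrC dU_y0 expr2 mulr_natr.
Qed.

Let L_deriv : L^`() = a%:P.
Proof.
rewrite /L derivB derivZ derivD derivX -polyC1 !derivC subr0 addr0.
by rewrite polyC1 alg_polyC.
Qed.

Let F_deriv : F^`() = c *: (((chebT R n)^`() \Po L) * a%:P).
Proof. by rewrite /F derivZ derivD -polyC1 derivC add0r deriv_comp L_deriv. Qed.

Let L1 : L.[1] = cos theta.
Proof. by rewrite /L !hornerE /a; field. Qed.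

Let F1 : F.[1] = 0.
Proof. by rewrite /F !hornerE horner_comp L1 chebT_y0 subrr mulr0. Qed.

Let deriv_F1 : F^`().[1] = 0.
Proof.
rewrite F_deriv hornerZ hornerM horner_comp L1 (deriv_chebT_chebU R n).1.
by rewrite hornerMn chebU_y0 mul0rn mul0r mulr0.
Qed.

Let deriv2_F1 : F^`()^`().[1] = 2.
Proof.
rewrite F_deriv derivZ derivM derivC mulr0 addr0 deriv_comp L_deriv.
rewrite hornerZ !hornerM horner_comp L1 hornerC.
have sin_theta_neq0 : sin theta != 0 by rewrite gt_eqF.
have -> : (chebT R n)^`()^`().[cos theta] = n%:R ^+ 2 / sin theta ^+ 2.
  by rewrite -deriv2_chebT_y0 mulfK // expf_neq0.
rewrite /c /tan a_cos theta_h sin_mulr2n; field.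
by rewrite n_neq0 !gt_eqF.
Qed.

Lemma S_poly_factor : F = S_poly R n * ('X - 1) ^+ 2 /\ (S_poly R n).[1] = 1.
Proof.
have [g Fg] := @sqr_XsubC_factor _ F 1 F1 deriv_F1; rewrite polyC1 in Fg.
have -> : S_poly R n = g.
  have -> : S_poly R n = F %/ ('X - 1) ^+ 2 by [].
  by rewrite Fg mulpK // expf_neq0 // -polyC1 polyXsubC_eq0.
split => //; have := deriv2_F1.
by rewrite Fg -polyC1 deriv2_mul_sqr_XsubC mulr2n; lra.
Qed.

Lemma size_S_poly : (size (S_poly R n) <= n.-1)%N.
Proof.
have size_L : (size L <= 2)%N.
  rewrite /L (leq_trans (size_polyD _ _)) // geq_max size_polyN size_poly1 andbT.
  rewrite (leq_trans (size_scale_leq _ _)) // (leq_trans (size_polyD _ _)) //.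
  by rewrite geq_max size_polyX size_poly1.
have size_F : (size F <= n.+1)%N.
  rewrite /F (leq_trans (size_scale_leq _ _)) // (leq_trans (size_polyD _ _)) //.
  rewrite geq_max size_poly1 /= (leq_trans (size_comp_poly_leq _ _)) // ltnS.
  rewrite -[X in (_ <= X)%N]muln1 leq_mul // -subn1 leq_subLR add1n //.
  exact: (size_chebT_chebU R n).1.
have [FS _] := S_poly_factor; move: size_F; rewrite FS.
have [->|S_neq0] := eqVneq (S_poly R n) 0; first by rewrite size_poly0.
rewrite size_Mmonic ?monic_exp ?monicXsubC // -polyC1 size_exp_XsubC addn3 ltnS.
by move=> lt_S; rewrite -ltnS prednK // ltnW.
Qed.

Let node k : R := (1 + cos (k%:R * theta)) / a - 1.

Let horner_F_node k : F.[node k] = c * (1 + (-1) ^+ k).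
Proof.
rewrite horner_F -(chebT_cos_mulr_pi R n k (ltnW n_ge2)); congr (_ * (1 + _.[_])).
by rewrite /node; field; rewrite gt_eqF.
Qed.

Let node_decreasing i j : (i < j <= n)%N -> node j < node i.
Proof.
have angle_in k : (k <= n)%N -> k%:R * theta \in `[0, pi].
  move=> kn; rewrite in_itv /= mulr_ge0 ?(ltW (andP theta_bounds).1) //=.
  by rewrite /theta mulrA ler_pdivrMr // mulrC ler_wpM2l ?ler_nat // ltW // pi_gt0.
move=> /andP[ij jn]; rewrite ltrD2r ltr_pM2r ?invr_gt0 // ltrD2l.
rewrite ltr_cos ?angle_in // ?(leq_trans (ltnW ij)) //.
by rewrite ltr_pM2r ?ltr_nat // (andP theta_bounds).1.
Qed.

Let node1 : node 1 = 1.
Proof.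
have := (andP theta_bounds).2; rewrite /node mul1r /a => theta_le.
have : 0 <= cos theta by apply: cos_ge0_pihalf; have := (andP theta_bounds).1; lra.
by move=> cos_ge0; field; lra.
Qed.

Let node_itv k : (2 <= k <= n)%N -> -1 <= node k < 1.
Proof.
move=> /andP[k2 kn]; rewrite -[X in _ < X]node1 node_decreasing ?k2 // andbT.
rewrite /node lerBrDr addNr divr_ge0 ?(ltW a_gt0) //.
Qed.

Let node_sign k q : 0 <= q <= c *+ 2 -> 0 <= (-1) ^+ k * (F.[node k] - q).
Proof.
rewrite horner_F_node -signr_odd mulr2n.
by case: (odd k) => /andP[q_ge q_le]; rewrite ?expr0 ?expr1; lra.
Qed.

Let sign_at_node (p v : {poly R}) k :
  (forall x, -1 <= x <= 1 -> 0 <= p.[x]) -> weighted_sup p <= extremal_value R n ->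
  (forall x, F.[x] - (1 - x) ^+ 2 * p.[x] = (x - 1) ^+ 3 * v.[x]) ->
  (2 <= k <= n)%N -> 0 <= (-1) ^+ k * (- v).[node k].
Proof.
move=> p_ge0 sup_le F_sub /node_itv /andP[].
move: (node k) (node_sign k) => x sign_x x_ge x_lt.
have q_ge0 : 0 <= (1 - x) ^+ 2 * p.[x] by rewrite mulr_ge0 ?sqr_ge0 // p_ge0 // x_ge ltW.
have q_le : (1 - x) ^+ 2 * p.[x] <= c *+ 2.
  rewrite -extremal_valueE (le_trans _ sup_le) // (le_trans (ler_norm _)) //.
  by rewrite weighted_sup_ub // x_ge ltW.
have := sign_x ((1 - x) ^+ 2 * p.[x]); rewrite q_ge0 q_le F_sub hornerN => /(_ isT).
have : 0 < (1 - x) ^+ 3 by rewrite exprn_gt0 // subr_gt0.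
have -> : (x - 1) ^+ 3 = - (1 - x) ^+ 3 by ring.
nra.
Qed.

Lemma S_poly_unique (p : {poly R}) :
  (size p <= n.-1)%N -> (forall x, -1 <= x <= 1 -> 0 <= p.[x]) -> p.[1] = 1 ->
  weighted_sup p <= extremal_value R n -> p = S_poly R n.
Proof.
move=> size_p p_ge0 p1 sup_le; have [FS S1] := S_poly_factor.
have /factor_theorem [v Sp] : root (S_poly R n - p) 1.
  by rewrite /root hornerD hornerN S1 p1 subrr.
have F_sub x : F.[x] - (1 - x) ^+ 2 * p.[x] = (x - 1) ^+ 3 * v.[x].
  rewrite FS -[S_poly R n](subrK p) Sp.
  by rewrite -polyC1 !(hornerXsubC, hornerM, hornerD, horner_exp); ring.
have size_v : (size v <= n - 2)%N.
  have [->|v_neq0] := eqVneq v 0; first by rewrite size_poly0.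
  have : (size (S_poly R n - p)%R <= n.-1)%N.
    by rewrite (leq_trans (size_polyD _ _)) // geq_max size_polyN size_S_poly.
  rewrite Sp size_Mmonic ?monicXsubC // size_XsubC addn2 /= => lt_v.
  by rewrite subn2 -ltnS prednK // ltn_predRL.
suff v0 : v = 0 by apply/eqP; rewrite eq_sym -subr_eq0 Sp v0 mul0r.
apply: oppr_inj; rewrite oppr0.
apply: (@sign_alternating_poly_eq0 _ (n - 2) (fun i => node (i + 2))).
- move=> i j /andP[ij jn]; apply: node_decreasing.
  by rewrite ltn_add2r ij addnC -leq_subRL.
- by rewrite size_polyN.
move=> i i_le; have sign_i : (-1) ^+ (i + 2) = (-1) ^+ i :> R.
  by rewrite exprD expr2 mulrNN !mulr1.
have k_itv : (2 <= i + 2 <= n)%N by rewrite leq_addl addnC -leq_subRL.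
by rewrite -sign_i; exact: (sign_at_node p v (i + 2) p_ge0 sup_le F_sub k_itv).
Qed.

Lemma weighted_sup_S_poly : weighted_sup (S_poly R n) = extremal_value R n.
Proof.
have [FS _] := S_poly_factor.
have weighted_S x : (1 - x) ^+ 2 * (S_poly R n).[x] = F.[x].
  by rewrite FS -polyC1 hornerM horner_exp hornerXsubC; ring.
rewrite extremal_valueE; apply/le_anti/andP; split.
  apply: weighted_sup_le => x /F_bounds /andP[F_ge F_le].
  by rewrite weighted_S ger0_norm.
have /andP[node2_ge node2_lt] : -1 <= node 2 < 1 by apply: node_itv; rewrite leqnn.
have F_node2 : F.[node 2] = c *+ 2 by rewrite horner_F_node mulr2n; ring.
apply: (le_trans _ (weighted_sup_ub (S_poly R n) (node 2) _)); last by rewrite node2_ge ltW.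
by rewrite weighted_S F_node2 ger0_norm // mulrn_wge0.
Qed.

End ExtremalPolynomial.

Theorem proposition1p5 (R : realType) (n : nat) (p : {poly R}) :
  (2 <= n)%N ->
  (size p <= n.-1)%N ->
  (forall x : R, -1 <= x <= 1 -> 0 <= p.[x]) ->
  p.[1] = 1 ->
  let M := sup [set `|(1 - x) ^+ 2 * p.[x]| | x in `[(-1 : R), 1]] in
  let c := 16 / (n%:R ^+ 2) * (tan (pi / (2 * n%:R))) ^+ 2 in
  c <= M /\ (M = c <-> p = S_poly R n).
Proof.
move=> n_ge2 size_p p_ge0 p1 M c.
rewrite -[M]/(weighted_sup p) -[c]/(extremal_value R n).
have S_sup := weighted_sup_S_poly R n n_ge2.
have S_unique := S_poly_unique R n n_ge2 p size_p p_ge0 p1.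
split; last by split=> [sup_eq | ->]; [apply: S_unique; rewrite sup_eq | ].
have [//|sup_lt] := lerP (extremal_value R n) (weighted_sup p).
by move: (sup_lt); rewrite (S_unique (ltW sup_lt)) S_sup ltxx.
Qed.
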